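(* Let $\sigma>0$, $\gamma''=\gamma(1+\sigma)$, an integer $\tau\ge1$ and $D\ge0$ be given. For every $(s,a)$ define $W_{\tau;\tau}(s,a)=0$, $Y_{\tau;\tau}(s,a)=D$, and for $t\ge\tau$: if $t\notin T^A$ then $W_{t+1;\tau}=W_{t;\tau}$ and $Y_{t+1;\tau}=Y_{t;\tau}$; if $t\in T^A$ then $W_{t+1;\tau}(s,a)=(1-\alpha_t)W_{t;\tau}(s,a)+\alpha_tw_t(s,a)$ and $Y_{t+1;\tau}(s,a)=(1-\alpha_t)Y_{t;\tau}(s,a)+\alpha_t\gamma''D$. Then on every realization for which $\|r_t\|\le D$ and $\|u^{BA}_t\|\le\sigma D$ for all $t\ge\tau$, we have for all $t\ge\tau$ and all $(s,a)$: $$-Y_{t;\tau}(s,a)+W_{t;\tau}(s,a)\le r_t(s,a)\le Y_{t;\tau}(s,a)+W_{t;\tau}(s,a).$$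
   Context: Finite MDP with discount $\gamma\in(0,1)$, rewards $R_t(s,a,s')$ with mean $R_{sa}^{s'}$; $\|Q\|=\max_{s,a}|Q(s,a)|$; $\mathcal T Q(s,a)=\mathbb E_{s'\sim P(\cdot|s,a)}[R_{sa}^{s'}+\gamma\max_{a'}Q(s',a')]$ with unique fixed point $Q^*$. Synchronous double Q-learning with learning rates $\alpha_t\in(0,1]$: at each iteration $t$ an independent fair coin selects UPDATE(A) or UPDATE(B); for every $(s,a)$ a next state $s'\sim P(\cdot|s,a)$ and a reward $R_t(s,a,s')$ are sampled. Under UPDATE(A): $a^*=\arg\max_{a'}Q^A_t(s',a')$, $Q^A_{t+1}(s,a)=Q^A_t(s,a)+\alpha_t(R_t(s,a,s')+\gamma Q^B_t(s',a^* )-Q^A_t(s,a))$, $Q^B_{t+1}=Q^B_t$. Under UPDATE(B): $b^*=\arg\max_{b'}Q^B_t(s',b')$, $Q^B_{t+1}(s,a)=Q^B_t(s,a)+\alpha_t(R_t(s,a,s')+\gamma Q^A_t(s',b^* )-Q^B_t(s,a))$, $Q^A_{t+1}=Q^A_t$. $T^A$ is the (random) set of iterations at which UPDATE(A) is chosen. $r_t:=Q^A_t-Q^*$, $u^{BA}_t:=Q^B_t-Q^A_t$, and for $t\in T^A$, $w_t(s,a):=R_t(s,a,s')+\gamma Q^A_t(s',a^* )-(\mathcal TQ^A_t)(s,a)$. *)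

(* Pathwise (realization-by-realization) model of synchronous
   double Q-learning on a finite MDP. *)
From HB Require Import structures.
From mathcomp Require Import all_boot all_order all_algebra.
Set Implicit Arguments. Unset Strict Implicit. Unset Printing Implicit Defensive.
Import Order.TTheory GRing.Theory Num.Theory.
Local Open Scope ring_scope.

Section DQ.
Variables (R : realFieldType) (S A : finType) (a0 : A).

Definition qfun := S -> A -> R.

Definition amax (Q : qfun) (s : S) : A := [arg max_(b > a0) Q s b]%O.

Definition supnorm (Q : qfun) : R :=
  \big[Num.max/0]_(p : S * A) `|Q p.1 p.2|.

Definition qsub (Q1 Q2 : qfun) : qfun := fun s a => Q1 s a - Q2 s a.

Definition bellman (gamma : R) (P : S -> A -> S -> R) (Rbar : S -> A -> S -> R)
  (Q : qfun) : qfun :=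
  fun s a => \sum_(s' : S) P s a s' * (Rbar s a s' + gamma * Q s' (amax Q s')).

Variables (gamma : R) (alpha : nat -> R).
(* a realization: coin t = true iff UPDATE(A) is chosen at iteration t
   (i.e. t \in T^A); nxt t s a = sampled next state s' for (s,a) at time t;
   rew t s a s' = the realized reward R_t(s,a,s'). *)
Variables (coin : nat -> bool) (nxt : nat -> S -> A -> S)
          (rew : nat -> S -> A -> S -> R) (QA0 QB0 : qfun).

Fixpoint dq (t : nat) : qfun * qfun :=
  match t with
  | 0 => (QA0, QB0)
  | t'.+1 =>
    let: (qa, qb) := dq t' in
    if coin t' then
      ((fun s a => let s' := nxt t' s a in
         qa s a + alpha t' * (rew t' s a s' + gamma * qb s' (amax qa s') - qa s a)),
       qb)
    else
      (qa,
       (fun s a => let s' := nxt t' s a in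
         qb s a + alpha t' * (rew t' s a s' + gamma * qa s' (amax qb s') - qb s a)))
  end.

Definition QA (t : nat) : qfun := (dq t).1.
Definition QB (t : nat) : qfun := (dq t).2.

Variables (P : S -> A -> S -> R) (Rbar : S -> A -> S -> R).

Definition wnoise (t : nat) : qfun :=
  fun s a => let s' := nxt t s a in
    rew t s a s' + gamma * QA t s' (amax (QA t) s') - bellman gamma P Rbar (QA t) s a.

Fixpoint Wseq (tau t : nat) : qfun :=
  match t with
  | 0 => fun _ _ => 0
  | t'.+1 =>
    if (t'.+1 <= tau)%N then fun _ _ => 0
    else if coin t' then
      fun s a => (1 - alpha t') * Wseq tau t' s a + alpha t' * wnoise t' s a
    else Wseq tau t'
  end.

Fixpoint Yseq (gamma2 D : R) (tau t : nat) : qfun :=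
  match t with
  | 0 => fun _ _ => D
  | t'.+1 =>
    if (t'.+1 <= tau)%N then fun _ _ => D
    else if coin t' then
      fun s a => (1 - alpha t') * Yseq gamma2 D tau t' s a + alpha t' * (gamma2 * D)
    else Yseq gamma2 D tau t'
  end.

End DQ.

From HB Require Import structures.
From mathcomp Require Import all_boot all_order all_algebra.
From mathcomp Require Import lra.
Import Order.TTheory GRing.Theory Num.Theory.
Local Open Scope ring_scope.
Set Implicit Arguments. Unset Strict Implicit.

(* Write r_t = Q^A_t - Qstar.  At an iteration t \in T^A the
   update of Q^A can be rearranged, using T Qstar = Qstar, as
     r_{t+1}(s,a) = (1 - alpha_t) r_t(s,a) + alpha_t (w_t(s,a) + d_t(s,a)),
   with the "drift"
     d_t(s,a) = (T Q^A_t - T Qstar)(s,a) + gamma (Q^B_t - Q^A_t)(s', a*_t).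
   Since T is a gamma-contraction for the sup norm, |d_t| <= gamma ||r_t||
   + gamma ||u^BA_t|| <= gamma (1 + sigma) D = gamma'' D.  The sandwich
   -Y + W <= r <= Y + W is then preserved by one step, because W and Y
   follow the same convex-combination recursion with w_t and gamma'' D in
   place of w_t + d_t and |d_t|; off T^A nothing moves.  At t = tau it holds
   since W = 0, Y = D and |r_tau| <= D. *)

Section QFunctions.
Variables (R : realFieldType) (S A : finType) (a0 : A).

Lemma amax_ge (Q : qfun R S A) s b : Q s b <= Q s (amax a0 Q s).
Proof. by rewrite /amax; case: arg_maxP => // i _; apply. Qed.

Lemma supnorm_ge (Q : qfun R S A) s a : `|Q s a| <= supnorm Q.
Proof. by rewrite /supnorm (bigD1 (s, a)) //= le_max lexx. Qed.

Lemma max_lipschitz (Q1 Q2 : qfun R S A) s :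
  `|Q1 s (amax a0 Q1 s) - Q2 s (amax a0 Q2 s)| <= supnorm (qsub Q1 Q2).
Proof.
have entry b : `|Q1 s b - Q2 s b| <= supnorm (qsub Q1 Q2) by exact: supnorm_ge.
have := entry (amax a0 Q1 s); have := entry (amax a0 Q2 s).
have := amax_ge Q1 s (amax a0 Q2 s); have := amax_ge Q2 s (amax a0 Q1 s).
rewrite !ler_norml => ? ? /andP[? ?] /andP[? ?]; apply/andP; split; lra.
Qed.

Lemma bellman_lipschitz (gamma : R) (P Rbar : S -> A -> S -> R)
    (Q1 Q2 : qfun R S A) s a :
  0 <= gamma ->
  (forall s', 0 <= P s a s') -> \sum_(s' : S) P s a s' = 1 ->
  `|bellman a0 gamma P Rbar Q1 s a - bellman a0 gamma P Rbar Q2 s a|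
    <= gamma * supnorm (qsub Q1 Q2).
Proof.
move=> gamma0 P0 P1; rewrite /bellman -sumrB.
rewrite -[X in _ <= X]mul1r -P1 mulr_suml.
apply: le_trans (ler_norm_sum _ _ _) _; apply: ler_sum => s' _.
rewrite -mulrBr normrM ger0_norm // ler_wpM2l //.
rewrite opprD addrACA subrr add0r -mulrBr normrM ger0_norm //.
by rewrite ler_wpM2l // max_lipschitz.
Qed.

End QFunctions.

Lemma sandwich_step (R : realFieldType) (al c y w r x d : R) :
  0 <= al <= 1 -> `|d| <= c -> -y + w <= r <= y + w ->
  let y' := (1 - al) * y + al * c in
  let w' := (1 - al) * w + al * x in
  - y' + w' <= (1 - al) * r + al * (x + d) <= y' + w'.
Proof.
move=> /andP[al0 al1]; rewrite ler_norml => /andP[d1 d2] /andP[r1 r2] /=.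
have k0 : 0 <= 1 - al by lra.
have := ler_wpM2l k0 r1; have := ler_wpM2l k0 r2.
have := ler_wpM2l al0 d1; have := ler_wpM2l al0 d2.
by move=> *; apply/andP; split; lra.
Qed.

Section DoubleQLearning.
Variables (R : realFieldType) (S A : finType) (a0 : A) (gamma : R)
  (alpha : nat -> R) (coin : nat -> bool) (nxt : nat -> S -> A -> S)
  (rew : nat -> S -> A -> S -> R) (QA0 QB0 : qfun R S A)
  (P Rbar : S -> A -> S -> R) (Qstar : qfun R S A).

Local Notation qA := (QA a0 gamma alpha coin nxt rew QA0 QB0).
Local Notation qB := (QB a0 gamma alpha coin nxt rew QA0 QB0).
Local Notation T := (bellman a0 gamma P Rbar).

Lemma QA_update t s a : coin t ->
  let s' := nxt t s a in
  qA t.+1 s a = qA t s a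
    + alpha t * (rew t s a s' + gamma * qB t s' (amax a0 (qA t) s') - qA t s a).
Proof. by rewrite /QA /QB /=; case: (dq _ _ _ _ _ _ _ _ t) => qa qb /= ->. Qed.

Lemma QA_stay t : ~~ coin t -> qA t.+1 = qA t.
Proof.
by rewrite /QA /=; case: (dq _ _ _ _ _ _ _ _ t) => qa qb /= /negbTE ->.
Qed.

Definition drift (t : nat) (s : S) (a : A) : R :=
  let s' := nxt t s a in
  (T (qA t) s a - T Qstar s a)
  + gamma * (qB t s' (amax a0 (qA t) s') - qA t s' (amax a0 (qA t) s')).

Lemma error_update t s a :
  T Qstar s a = Qstar s a -> coin t ->
  qA t.+1 s a - Qstar s a =
  (1 - alpha t) * (qA t s a - Qstar s a)
  + alpha t * (wnoise a0 gamma alpha coin nxt rew QA0 QB0 P Rbar t s a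
               + drift t s a).
Proof.
move=> fixQ ct; rewrite QA_update // /wnoise /drift fixQ /=.
by rewrite -/qA -/qB; lra.
Qed.

Lemma drift_bound t s a (sigma D : R) :
  0 <= gamma ->
  (forall s', 0 <= P s a s') -> \sum_(s' : S) P s a s' = 1 ->
  supnorm (qsub (qA t) Qstar) <= D ->
  supnorm (qsub (qB t) (qA t)) <= sigma * D ->
  `|drift t s a| <= gamma * (1 + sigma) * D.
Proof.
move=> gamma0 P0 P1 rD uD; rewrite /drift /=.
set s' := nxt t s a; set b := amax a0 (qA t) s'.
have bellD : `|T (qA t) s a - T Qstar s a| <= gamma * D.
  by apply: le_trans (ler_wpM2l gamma0 rD); exact: bellman_lipschitz.
have uBA : `|qB t s' b - qA t s' b| <= sigma * D.
  by apply: le_trans uD; exact: supnorm_ge.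
apply: le_trans (ler_normD _ _) _; rewrite normrM ger0_norm //.
have := ler_wpM2l gamma0 uBA; lra.
Qed.

Variables (gamma2 D : R).

Local Notation W := (Wseq a0 gamma alpha coin nxt rew QA0 QB0 P Rbar).
Local Notation Y := (Yseq alpha coin gamma2 D).

Definition sandwich (tau t : nat) : Prop :=
  forall s a, - Y tau t s a + W tau t s a <= qA t s a - Qstar s a
                <= Y tau t s a + W tau t s a.

Lemma sandwich_start tau :
  (1 <= tau)%N -> supnorm (qsub (qA tau) Qstar) <= D -> sandwich tau tau.
Proof.
case: tau => // n _ rD s a; rewrite /= leqnn.
have := le_trans (supnorm_ge _ s a) rD.
by rewrite !addr0 ler_norml.
Qed.

Lemma sandwich_next tau t :
  (tau <= t)%N -> T Qstar =2 Qstar -> 0 < alpha t <= 1 ->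
  (forall s a, `|drift t s a| <= gamma2 * D) ->
  sandwich tau t -> sandwich tau t.+1.
Proof.
move=> ht fixQ /andP[al0 al1] dD inv s a /=.
rewrite ltnNge ht /=.
case ct: (coin t); last by rewrite QA_stay ?ct //; exact: inv.
rewrite error_update ?fixQ //.
by apply: sandwich_step; [rewrite ltW | exact: dD | exact: inv].
Qed.

End DoubleQLearning.

Unset Implicit Arguments.

Theorem lemma12
  (R : realFieldType) (S A : finType) (a0 : A)
  (gamma : R) (P : S -> A -> S -> R) (Rbar : S -> A -> S -> R) (Qstar : qfun R S A)
  (alpha : nat -> R)
  (coin : nat -> bool) (nxt : nat -> S -> A -> S) (rew : nat -> S -> A -> S -> R)
  (QA0 QB0 : qfun R S A)
  (sigma D : R) (tau : nat) :
  0 < gamma < 1 ->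
  (forall s a s', 0 <= P s a s') ->
  (forall s a, \sum_(s' : S) P s a s' = 1) ->
  (forall s a, bellman a0 gamma P Rbar Qstar s a = Qstar s a) ->
  (forall t, 0 < alpha t <= 1) ->
  0 < sigma -> (1 <= tau)%N -> 0 <= D ->
  (forall t, (tau <= t)%N ->
     supnorm (qsub (QA a0 gamma alpha coin nxt rew QA0 QB0 t) Qstar) <= D /\
     supnorm (qsub (QB a0 gamma alpha coin nxt rew QA0 QB0 t)
                   (QA a0 gamma alpha coin nxt rew QA0 QB0 t)) <= sigma * D) ->
  forall t, (tau <= t)%N -> forall s a,
    let r := qsub (QA a0 gamma alpha coin nxt rew QA0 QB0 t) Qstar in
    let W := Wseq a0 gamma alpha coin nxt rew QA0 QB0 P Rbar tau t in
    let Y := Yseq alpha coin (gamma * (1 + sigma)) D tau t in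
    - Y s a + W s a <= r s a <= Y s a + W s a.
Proof.
move=> /andP[gamma0 _] P0 P1 fixQ alpha01 _ tau1 _ bounds t ht s a.
suff inv : sandwich a0 gamma alpha coin nxt rew QA0 QB0 P Rbar Qstar
             (gamma * (1 + sigma)) D tau t by exact: inv.
rewrite -(subnKC ht); elim: (t - tau)%N => [|k IH].
  by rewrite addn0; apply: sandwich_start => //; case: (bounds tau (leqnn _)).
have htk : (tau <= tau + k)%N by rewrite leq_addr.
have [rD uD] := bounds _ htk.
rewrite addnS; apply: sandwich_next => // s' a'.
exact: drift_bound (ltW gamma0) (P0 s' a') (P1 s' a') rD uD.
Qed.
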